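(* Let $X$ be a finite set with the discrete uniformity $\mathcal U$. Then the free non-archimedean precompact group $F^{Prec}_{NA}(X,\mathcal U)$ is algebraically the free group $F(X)$ over $X$ (i.e. the universal map $i$ is injective and $i(X)$ freely generates it).
   Context: All groups are Hausdorff. A topological group is non-archimedean if it has a local base at the identity of open subgroups. $F^{Prec}_{NA}(X,\mathcal U)$ is the precompact non-archimedean topological group with a uniformly continuous map $i\colon X\to F^{Prec}_{NA}$ such that every uniformly continuous map from $X$ into a precompact non-archimedean group factors uniquely as a continuous homomorphism composed with $i$. *)

From mathcomp Require Import all_boot.
From mathcomp Require Import boolp classical_sets cardinality topology.
Set Implicit Arguments. Unset Strict Implicit. Unset Printing Implicit Defensive.
Local Open Scope classical_set_scope.

Record grp (G : Type) := Grp {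
  gmul : G -> G -> G;
  ginv : G -> G;
  gone : G;
  gmulA : forall x y z, gmul x (gmul y z) = gmul (gmul x y) z;
  gmul1 : forall x, gmul gone x = x;
  gmulV : forall x, gmul (ginv x) x = gone
}.

Definition is_hom (G H : Type) (gG : grp G) (gH : grp H) (f : G -> H) :=
  forall x y, f (gmul gG x y) = gmul gH (f x) (f y).

Definition subgroup (G : Type) (gG : grp G) (A : set G) :=
  A (gone gG) /\ (forall x y, A x -> A y -> A (gmul gG x y)) /\
  (forall x, A x -> A (ginv gG x)).

Record topgrp (T : topologicalType) := TopGrp {
  tg_grp :> grp T;
  tg_mul_cont : continuous (fun p : T * T => gmul tg_grp p.1 p.2);
  tg_inv_cont : continuous (ginv tg_grp);
  tg_hausdorff : hausdorff_space T
}.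

Definition non_archimedean (T : topologicalType) (gT : topgrp T) :=
  forall U : set T, nbhs (gone gT) U ->
    exists H : set T, subgroup gT H /\ open H /\ H `<=` U.

Definition precompact (T : topologicalType) (gT : topgrp T) :=
  forall U : set T, nbhs (gone gT) U ->
    exists F : set T, finite_set F /\
      forall g, exists2 a, F a & U (gmul gT (ginv gT a) g).

Definition discrete_entourage (X : Type) (E : set (X * X)) :=
  forall x, E (x, x).

(* uniform continuity of f : (X, discrete uniformity) -> G, G with its
   (left) group uniformity *)
Definition unif_cont_discrete (X : Type) (T : topologicalType) (gT : topgrp T)
  (f : X -> T) :=
  forall U : set T, nbhs (gone gT) U ->
    exists E : set (X * X), discrete_entourage E /\
      forall x y, E (x, y) -> U (gmul gT (ginv gT (f x)) (f y)).

Definition is_free_prec_NA (X : Type) (G : topologicalType) (gG : topgrp G)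
  (i : X -> G) :=
  precompact gG /\ non_archimedean gG /\ unif_cont_discrete gG i /\
  forall (H : topologicalType) (gH : topgrp H),
    precompact gH -> non_archimedean gH ->
    forall f : X -> H, unif_cont_discrete gH f ->
      exists! phi : G -> H, [/\ continuous phi, is_hom gG gH phi &
                                forall x, phi (i x) = f x].

Definition algebraically_free (X : Type) (G : Type) (gG : grp G) (i : X -> G) :=
  injective i /\
  forall (K : Type) (gK : grp K) (f : X -> K),
    exists! phi : G -> K, is_hom gG gK phi /\ forall x, phi (i x) = f x.

(* A nonempty reduced word w over X already survives in a finite group: let each
   generator act on the positions 0, ..., |w| so that the k-th letter of w moves k
   to k + 1 (a partial injection, completed to a permutation); then w moves 0 to |w|.
   Finite discrete groups are precompact and non-archimedean, and every map out of a
   discrete space is uniformly continuous, so these actions factor through i and no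
   nonempty reduced word in i(X) is trivial.  The subgroup generated by i(X), with the
   subspace topology, is again precompact and non-archimedean; factoring i through it
   and using uniqueness of factorizations shows that it is the whole group.  A group
   generated by i(X) without nontrivial reduced relations is free on X. *)

From Pilot Require Import Defs.
From mathcomp Require Import all_boot.
From mathcomp Require Import boolp classical_sets cardinality topology.
From mathcomp Require Import functions fingroup perm zify.
Set Implicit Arguments. Unset Strict Implicit. Unset Printing Implicit Defensive.

Section GroupTheory.
Variables (G : Type) (g : grp G).
Local Notation "x * y" := (gmul g x y).
Local Notation "x ^-1" := (ginv g x).
Local Notation "1" := (gone g).

Lemma gmulV_r x : x * x^-1 = 1.
Proof.
have xVV : x^-1^-1 * x^-1 = 1 by exact: gmulV.
by rewrite -[LHS](gmul1 g) -{1}xVV -gmulA (gmulA g x^-1) gmulV gmul1.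
Qed.

Lemma gmul1_r x : x * 1 = x.
Proof. by rewrite -(gmulV g x) gmulA gmulV_r gmul1. Qed.

Lemma ginv_unique x y : x * y = 1 -> x = y^-1.
Proof. by move=> xy1; rewrite -[x]gmul1_r -(gmulV_r y) gmulA xy1 gmul1. Qed.

Lemma ginvK x : x^-1^-1 = x.
Proof. by symmetry; apply: ginv_unique; rewrite gmulV_r. Qed.

Lemma ginvM x y : (x * y)^-1 = y^-1 * x^-1.
Proof.
by symmetry; apply: ginv_unique; rewrite -gmulA (gmulA g x^-1) gmulV gmul1 gmulV.
Qed.

Lemma ginv1 : 1^-1 = 1.
Proof. by symmetry; apply: ginv_unique; rewrite gmul1. Qed.

End GroupTheory.

Section Homomorphisms.
Variables (G H : Type) (gG : grp G) (gH : grp H) (phi : G -> H).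
Hypothesis phi_hom : is_hom gG gH phi.

Lemma hom1 : phi (gone gG) = gone gH.
Proof.
have e2 : gmul gH (phi (gone gG)) (phi (gone gG)) = gmul gH (phi (gone gG)) (gone gH).
  by rewrite -phi_hom gmul1 gmul1_r.
by rewrite -[LHS](gmul1 gH) -(gmulV gH (phi (gone gG))) -!gmulA e2 gmul1_r.
Qed.

Lemma homV x : phi (ginv gG x) = ginv gH (phi x).
Proof. by apply: ginv_unique; rewrite -phi_hom gmulV hom1. Qed.

End Homomorphisms.

Definition fingrp (gT : finGroupType) : grp gT :=
  Grp (@mulgA gT) (@mul1g gT) (@mulVg gT).

(* A letter [(x, true)] stands for the generator [x], [(x, false)] for its inverse. *)
Section Words.
Variable X : Type.

Definition inv_letter (l : X * bool) := (l.1, ~~ l.2).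
Definition inv_word (w : seq (X * bool)) := rev (map inv_letter w).

Variables (G : Type) (g : grp G) (f : X -> G).

Definition eval_letter (l : X * bool) := if l.2 then f l.1 else ginv g (f l.1).
Definition eval_word (w : seq (X * bool)) :=
  foldr (fun l => gmul g (eval_letter l)) (gone g) w.

Lemma eval_word_cat u v : eval_word (u ++ v) = gmul g (eval_word u) (eval_word v).
Proof. by elim: u => [|l u IHu] /=; rewrite ?gmul1 // IHu gmulA. Qed.

Lemma eval_word1 x : eval_word [:: (x, true)] = f x.
Proof. exact: gmul1_r. Qed.

Lemma eval_inv_word w : eval_word (inv_word w) = ginv g (eval_word w).
Proof.
elim: w => [|[x b] w IHw] /=; first by rewrite ginv1.
rewrite /inv_word /= rev_cons -cats1 eval_word_cat -/(inv_word w) IHw ginvM.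
by rewrite /= gmul1_r /eval_letter /=; case: b; rewrite ?ginvK.
Qed.

End Words.

Lemma eq_eval_word (X G : Type) (g : grp G) (f f' : X -> G) : f =1 f' ->
  eval_word g f =1 eval_word g f'.
Proof. by move=> ff' w; elim: w => [|[x b] w IHw] //=; rewrite IHw /eval_letter ff'. Qed.

Lemma eval_word_hom (X G H : Type) (gG : grp G) (gH : grp H) (phi : G -> H)
    (f : X -> G) w :
  is_hom gG gH phi -> phi (eval_word gG f w) = eval_word gH (phi \o f) w.
Proof.
move=> phi_hom; elim: w => [|[x b] w IHw] /=; first exact: hom1.
by rewrite phi_hom IHw /eval_letter; case: b => //=; rewrite (homV phi_hom).
Qed.

Section Reduction.
Variable X : eqType.

Definition cancels (l1 l2 : X * bool) := (l1.1 == l2.1) && (l1.2 != l2.2).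
Definition reduced (w : seq (X * bool)) := sorted (fun l1 l2 => ~~ cancels l1 l2) w.

Lemma reduced_nth w d k : reduced w -> k.+1 < size w ->
  ~~ cancels (nth d w k) (nth d w k.+1).
Proof. by case: w => [|l w] // /pathP; apply. Qed.

Lemma not_reduced_split w : ~~ reduced w ->
  exists u l1 l2 v, w = u ++ l1 :: l2 :: v /\ cancels l1 l2.
Proof.
elim: w => [|l1 [|l2 w] IHw] //; rewrite /reduced /= negb_and negbK.
case/orP=> [l12|/IHw [u [l [l' [v [-> ll']]]]]]; first by exists [::], l1, l2, w.
by exists (l1 :: u), l, l', v.
Qed.

Lemma eval_word_cancel (G : Type) (g : grp G) (f : X -> G) u l1 l2 v :
  cancels l1 l2 -> eval_word g f (u ++ l1 :: l2 :: v) = eval_word g f (u ++ v).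
Proof.
case: l1 l2 => [x b] [y c] /andP [/= /eqP <- bc]; rewrite !eval_word_cat /=.
congr (gmul g _ _); rewrite /eval_letter /= gmulA.
by case: b c bc => [] [] //= _; rewrite ?gmulV_r ?gmulV gmul1.
Qed.

End Reduction.

Section PermExtension.
Variables (T : finType) (p : T -> option T).
Hypothesis p_inj : forall a a' b, p a = Some b -> p a' = Some b -> a = a'.

Let dom := [set a | p a != None].
Let img := [set odflt a (p a) | a in dom].
Let outside_dom := enum (~: dom).
Let outside_img := enum (~: img).

(* Outside its domain, [p] is completed by a bijection from [~: dom] onto
   [~: img], matching both complements through their enumerations. *)
Let ext a := if p a is Some b then b else nth a outside_img (index a outside_dom).

Let size_outside : size outside_dom = size outside_img.
Proof.
have card_img : #|img| = #|dom|.
  apply: card_in_imset => a a'; rewrite !inE.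
  case Ea: (p a) => [b|] //; case Ea': (p a') => [b'|] //= _ _ bb'.
  by apply: p_inj Ea _; rewrite bb'.
by apply/eqP; rewrite -!cardE -(eqn_add2l #|dom|) cardsC -{1}card_img cardsC.
Qed.

Let ext_outside a : p a = None -> ext a \in outside_img.
Proof.
move=> Ea; rewrite /ext Ea mem_nth // -size_outside index_mem.
by rewrite /outside_dom mem_enum !inE Ea.
Qed.

Let img_inside a b : p a = Some b -> b \notin outside_img.
Proof.
move=> Ea; rewrite /outside_img mem_enum !inE negbK; apply/imsetP.
by exists a; rewrite ?inE Ea.
Qed.

Let ext_inj : injective ext.
Proof.
move=> a a'; case Ea: (p a) => [b|]; case Ea': (p a') => [b'|].
- by rewrite /ext Ea Ea' => bb'; apply: p_inj Ea _; rewrite bb'.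
- by move=> E; have := ext_outside Ea'; rewrite -E /ext Ea (negbTE (img_inside Ea)).
- by move=> E; have := ext_outside Ea; rewrite E /ext Ea' (negbTE (img_inside Ea')).
have mem_dom c : p c = None -> c \in outside_dom.
  by move=> Ec; rewrite /outside_dom mem_enum !inE Ec.
have idx_dom c : p c = None -> index c outside_dom < size outside_img.
  by move=> Ec; rewrite -size_outside index_mem mem_dom.
rewrite /ext Ea Ea' (set_nth_default a' a (idx_dom _ Ea)) => /eqP.
rewrite (nth_uniq a') ?enum_uniq ?idx_dom // => /eqP.
exact: (index_inj a (mem_dom _ Ea) (mem_dom _ Ea')).
Qed.

Definition perm_ext : {perm T} := perm ext_inj.

Lemma perm_extE a b : p a = Some b -> perm_ext a = b.
Proof. by rewrite permE /ext => ->. Qed.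

End PermExtension.

Section ReducedWordAction.
Variables (X : finType) (w : seq (X * bool)) (d : X * bool).
Hypothesis w_reduced : reduced w.
Local Notation n := (size w).

(* [x] sends [k] to [k.+1] if [w_k = x] and [k.+1] to [k] if [w_k = x^-1], so
   that every letter [w_k] moves [k] to [k.+1]; this partial map is injective
   because [w] is reduced. *)
Definition word_step (x : X) (a : 'I_n.+1) : option 'I_n.+1 :=
  if (a < n) && (nth d w a == (x, true)) then Some (inord a.+1)
  else if (0 < a) && (nth d w a.-1 == (x, false)) then Some (inord a.-1)
  else None.

Lemma word_stepP x a b : word_step x a = Some b ->
  (a < n /\ nth d w a = (x, true) /\ b = a.+1 :> nat) \/
  (0 < a /\ nth d w a.-1 = (x, false) /\ b = a.-1 :> nat).
Proof.
have := ltn_ord a; rewrite /word_step.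
case: ifP => [/andP [an /eqP wa] _ [<-]|_]; first by left; rewrite inordK.
case: ifP => [/andP [a0 /eqP wa] an [<-]|//]; by right; rewrite inordK //; lia.
Qed.

Lemma word_step_inj x a a' b :
  word_step x a = Some b -> word_step x a' = Some b -> a = a'.
Proof.
have no_cancel k b1 b2 : nth d w k = (x, b1) -> k.+1 < n -> b1 != b2 ->
    nth d w k.+1 = (x, b2) -> False.
  move=> wk kn b12 wk1; have := reduced_nth d w_reduced kn.
  by rewrite wk wk1 /cancels /= eqxx b12.
have [an an'] := (ltn_ord a, ltn_ord a').
case/word_stepP=> [[a0 [wa ba]]|[a0 [wa ba]]]
  /word_stepP [[a0' [wa' ba']]|[a0' [wa' ba']]]; try by apply: ord_inj; lia.
- by case: (no_cancel a true false wa) => //; [lia | have ->: a.+1 = a'.-1 by lia].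
- by case: (no_cancel a' true false wa') => //; [lia | have ->: a'.+1 = a.-1 by lia].
Qed.

Definition word_perm (x : X) : {perm 'I_n.+1} := perm_ext (@word_step_inj x).

Lemma word_perm_letter k : k < n ->
  eval_letter (fingrp _) word_perm (nth d w k) (inord k) = inord k.+1.
Proof.
move=> kn; rewrite /eval_letter; case wk: (nth d w k) => [x []] /=.
  apply: perm_extE; rewrite /word_step inordK; last lia.
  by rewrite kn wk eqxx.
apply: (canLR (permK (word_perm x))); symmetry; apply: perm_extE.
rewrite /word_step inordK; last lia.
case: ifP => [/andP [kn1 /eqP wk1]|_]; last by rewrite /= wk eqxx.
by have := reduced_nth d w_reduced kn1; rewrite wk wk1 /cancels /= eqxx.
Qed.

Lemma word_perm_drop k : k <= n ->
  eval_word (fingrp _) word_perm (drop k w) (inord k) = inord n.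
Proof.
move=> kn; have [m] := ubnP (n - k); elim: m k kn => // m IHm k kn nkm.
have [-> | kn'] := eqVneq k n; first by rewrite drop_size perm1.
rewrite (drop_nth d) /=; last lia.
by rewrite permM word_perm_letter; [apply: IHm | ]; lia.
Qed.

Lemma word_perm_neq1 : 0 < n -> eval_word (fingrp _) word_perm w != 1%g.
Proof.
move=> n0; apply/eqP => w1; have := word_perm_drop (leq0n n).
by rewrite drop0 w1 perm1 => /(congr1 val); rewrite /= !inordK //; lia.
Qed.

End ReducedWordAction.

Lemma reduced_word_perm_neq1 (X : finType) (w : seq (X * bool)) :
  reduced w -> w != [::] ->
  exists g : X -> {perm 'I_(size w).+1}, eval_word (fingrp _) g w != 1%g.
Proof. by case: w => // l w w_red _; exists (word_perm l w_red); apply: word_perm_neq1. Qed.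

Local Open Scope classical_set_scope.

Section DiscreteFinGroup.
Variable gT : finGroupType.
Local Notation D := (discrete_topology gT).

Lemma discrete_mulg_continuous : continuous (fun p : D * D => (p.1 * p.2 : D)%g).
Proof.
move=> [a b]; apply/discrete_cvg; exists ([set a], [set b]).
  by split; apply: discrete_set1.
by move=> [x y] [/= -> ->].
Qed.

Lemma discrete_invg_continuous : continuous (fun x : D => (x^-1 : D)%g).
Proof.
by move=> a U /nbhs_singleton Ua; rewrite /= nbhs_principalE; apply/principal_filterP.
Qed.

Definition discrete_fingrp : topgrp D :=
  @TopGrp D (fingrp gT) discrete_mulg_continuous discrete_invg_continuous discrete_hausdorff.

Lemma discrete_fingrp_precompact : Defs.precompact discrete_fingrp.
Proof.
move=> U U1; exists setT; split; first exact: finite_finset.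
by move=> a; exists a => //; rewrite /= mulVg; exact: nbhs_singleton U1.
Qed.

Lemma discrete_fingrp_non_archimedean : non_archimedean discrete_fingrp.
Proof.
move=> U U1; exists [set 1%g : D]; split; [split; [|split]|split].
- by [].
- by move=> x y /= -> ->; rewrite mulg1.
- by move=> x /= ->; rewrite invg1.
- exact: discrete_open.
- by move=> x /= ->; exact: nbhs_singleton U1.
Qed.

End DiscreteFinGroup.

Section SubTopGroup.
Variables (G : topologicalType) (gG : topgrp G) (S : set G).
Hypothesis S_subgroup : subgroup gG S.
Local Notation ST := (set_type S).
Let S1 := S_subgroup.1.
Let SM := S_subgroup.2.1.
Let SV := S_subgroup.2.2.

Definition sub_mul (a b : ST) : ST := SigSub (mem_set (SM (set_valP a) (set_valP b))).
Definition sub_inv (a : ST) : ST := SigSub (mem_set (SV (set_valP a))).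
Definition sub_one : ST := SigSub (mem_set S1).

Lemma sub_mulA a b c : sub_mul a (sub_mul b c) = sub_mul (sub_mul a b) c.
Proof. by apply: val_inj; apply: gmulA. Qed.

Lemma sub_mul1 a : sub_mul sub_one a = a.
Proof. by apply: val_inj; apply: gmul1. Qed.

Lemma sub_mulV a : sub_mul (sub_inv a) a = sub_one.
Proof. by apply: val_inj; apply: gmulV. Qed.

Definition sub_grp : grp ST := Grp sub_mulA sub_mul1 sub_mulV.

Lemma set_val_continuous : continuous (set_val : ST -> G).
Proof. exact: initial_continuous. Qed.

Lemma sub_mul_continuous : continuous (fun p : ST * ST => sub_mul p.1 p.2).
Proof.
apply: (@continuous_comp_initial _ _ _ (set_val : ST -> G)) => -[a b].
have -> : set_val \o (fun p : ST * ST => sub_mul p.1 p.2) =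
    (fun p : G * G => gmul gG p.1 p.2) \o (fun p : ST * ST => (set_val p.1, set_val p.2)).
  by apply: funext => -[].
apply: continuous_comp; last exact: tg_mul_cont.
move=> W /= [[U V] /= [Ua Vb] UVW]; exists (set_val @^-1` U, set_val @^-1` V).
  by split; apply: set_val_continuous.
by move=> [x y] /= [Ux Vy]; apply: UVW.
Qed.

Lemma sub_inv_continuous : continuous sub_inv.
Proof.
apply: (@continuous_comp_initial _ _ _ (set_val : ST -> G)) => a.
have -> : set_val \o sub_inv = ginv gG \o (set_val : ST -> G) by [].
by apply: continuous_comp; [exact: set_val_continuous | exact: tg_inv_cont].
Qed.

Lemma sub_hausdorff : hausdorff_space ST.
Proof.
move=> a b ab; apply: val_inj; apply: (tg_hausdorff gG) => U V Ua Vb.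
have [c [Uc Vc]] := ab _ _ (set_val_continuous Ua) (set_val_continuous Vb).
by exists (set_val c).
Qed.

Definition sub_topgrp : topgrp ST :=
  @TopGrp _ sub_grp sub_mul_continuous sub_inv_continuous sub_hausdorff.

Lemma sub_nbhs (a : ST) (U : set ST) : nbhs a U ->
  exists2 V, nbhs (set_val a) V & set_val @^-1` V `<=` U.
Proof.
rewrite nbhsE => -[O [[V oV eqO] Oa] OU].
exists V; last by rewrite eqO.
by exists V => //; split => //; rewrite -eqO in Oa.
Qed.

Lemma sub_topgrp_non_archimedean : non_archimedean gG -> non_archimedean sub_topgrp.
Proof.
move=> gG_NA U /sub_nbhs [V V1 VU].
have [W [[W1 [WM WV]] [oW WsubV]]] := gG_NA V V1.
exists (set_val @^-1` W); split; [split; [|split]|split].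
- exact: W1.
- by move=> a b; apply: WM.
- by move=> a; apply: WV.
- by exists W.
- by move=> a /WsubV /VU.
Qed.

(* Cover [G] by translates [a W] of an open subgroup [W]; each of them that meets
   [S] equals [s_a W] for any [s_a] in the intersection. *)
Lemma sub_topgrp_precompact :
  Defs.precompact gG -> non_archimedean gG -> Defs.precompact sub_topgrp.
Proof.
move=> gG_prec gG_NA U /sub_nbhs [V V1 VU].
have [W [[W1 [WM WV]] [oW WsubV]]] := gG_NA V V1.
have [F [finF coverF]] := gG_prec W (open_nbhs_nbhs (conj oW W1)).
pose meets a := [set s : ST | W (gmul gG (ginv gG a) (set_val s))].
pose near a := xget sub_one (meets a).
exists (near @` F); split; first exact: finite_image.
move=> s; have [a Fa Was] := coverF (set_val s).
exists (near a); first by exists a.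
have Wa : meets a (near a) := xgetI sub_one Was.
apply/VU/WsubV; have := WM _ _ (WV _ Wa) Was.
by rewrite ginvM ginvK -gmulA (gmulA gG a) gmulV_r gmul1.
Qed.

End SubTopGroup.

Section FreenessFromWords.
Variables (X : eqType) (G : Type) (g : grp G) (i : X -> G).
Hypothesis i_generates : forall a, exists w, eval_word g i w = a.
Hypothesis reduced_neq1 : forall w, reduced w -> w != [::] -> eval_word g i w <> gone g.

Lemma eval_word_eq1 w : eval_word g i w = gone g ->
  forall (K : Type) (gK : grp K) (f : X -> K), eval_word gK f w = gone gK.
Proof.
have [m] := ubnP (size w); elim: m w => // m IHm w wm w1 K gK f.
have [w_red|/not_reduced_split [u [l1 [l2 [v [ew l12]]]]]] := boolP (reduced w).
  by case: (eqVneq w [::]) => [-> //|w0]; case: (reduced_neq1 w_red w0).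
rewrite ew eval_word_cancel //; apply: IHm; last by move: w1; rewrite ew eval_word_cancel.
by move: wm; rewrite ew !size_cat /=; lia.
Qed.

Lemma eval_word_congr u v : eval_word g i u = eval_word g i v ->
  forall (K : Type) (gK : grp K) (f : X -> K), eval_word gK f u = eval_word gK f v.
Proof.
move=> uv K gK f; have uv1 : eval_word g i (u ++ inv_word v) = gone g.
  by rewrite eval_word_cat eval_inv_word uv gmulV_r.
have := eval_word_eq1 uv1 gK f; rewrite eval_word_cat eval_inv_word.
by move=> uv'; rewrite (ginv_unique uv') ginvK.
Qed.

Lemma algebraically_free_of_words : algebraically_free g i.
Proof.
split=> [x y ixy|K gK f].
  apply/eqP; apply: contraT => xy; case: (reduced_neq1 (w := [:: (x, true); (y, false)])).
  - by rewrite /reduced /= /cancels /= (negbTE xy).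
  - by [].
  - by rewrite /= /eval_letter /= gmul1_r ixy gmulV_r.
pose word a := projT1 (cid (i_generates a)).
have wordK a : eval_word g i (word a) = a by rewrite /word; case: cid.
exists (fun a => eval_word gK f (word a)); split; first split.
- move=> a b; rewrite -eval_word_cat; apply: eval_word_congr.
  by rewrite eval_word_cat !wordK.
- move=> x; rewrite -(eval_word1 gK f x); apply: eval_word_congr.
  by rewrite wordK eval_word1.
- move=> phi [phi_hom phi_i]; apply: funext => a.
  rewrite -{2}(wordK a) (eval_word_hom _ _ phi_hom).
  by apply: eq_eval_word => x /=; rewrite phi_i.
Qed.

End FreenessFromWords.

Lemma unif_cont_discrete_any (X : Type) (T : topologicalType) (gT : topgrp T)
  (f : X -> T) : unif_cont_discrete gT f.
Proof.
move=> U U1; exists (fun p => p.1 = p.2); split=> // x y /= <-.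
by rewrite gmulV; apply: nbhs_singleton.
Qed.

Section FreePrecompactNonArchimedean.
Variables (X : finType) (G : topologicalType) (gG : topgrp G) (i : X -> G).
Hypothesis i_free : is_free_prec_NA gG i.

Lemma free_prec_NA_factor (H : topologicalType) (gH : topgrp H) (f : X -> H) :
  Defs.precompact gH -> non_archimedean gH ->
  exists phi : G -> H, [/\ continuous phi, is_hom gG gH phi & forall x, phi (i x) = f x].
Proof.
move=> gH_prec gH_NA; have [_ [_ [_ univ]]] := i_free.
have [phi [phi_spec _]] := univ _ _ gH_prec gH_NA f (@unif_cont_discrete_any _ _ gH f).
by exists phi.
Qed.

Lemma free_prec_NA_reduced_neq1 w :
  reduced w -> w != [::] -> eval_word gG i w <> gone gG.
Proof.
move=> w_red w0 w1; have [g gw] := reduced_word_perm_neq1 w_red w0.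
have [phi [_ phi_hom phi_i]] := @free_prec_NA_factor _ (discrete_fingrp _) g
  (@discrete_fingrp_precompact _) (@discrete_fingrp_non_archimedean _).
move: gw; rewrite -(eq_eval_word _ phi_i) -(eval_word_hom _ _ phi_hom) w1.
by rewrite (hom1 phi_hom) eqxx.
Qed.

Lemma free_prec_NA_generated a : exists w, eval_word gG i w = a.
Proof.
have [gG_prec [gG_NA [i_uc univ]]] := i_free.
pose S := [set b | exists w, eval_word gG i w = b].
have S_subgroup : subgroup gG S.
  split; first by exists [::].
  split=> [_ _ [u <-] [v <-]|_ [u <-]]; first by exists (u ++ v); rewrite eval_word_cat.
  by exists (inv_word u); rewrite eval_inv_word.
have Si x : S (i x) by exists [:: (x, true)]; rewrite eval_word1.
have [psi [psi_cont psi_hom psi_i]] := @free_prec_NA_factor _ (sub_topgrp S_subgroup)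
  (fun x => SigSub (mem_set (Si x)))
  (sub_topgrp_precompact gG_prec gG_NA) (sub_topgrp_non_archimedean gG_NA).
have [phi [_ phi_unique]] := univ _ _ gG_prec gG_NA i i_uc.
have phi_id : phi = id by apply: phi_unique; split=> // b; apply: cvg_id.
have phi_psi : phi = set_val \o psi.
  apply: phi_unique; split=> [b|b c|x] /=; last by rewrite psi_i.
  - by apply: continuous_comp; [exact: psi_cont | exact: set_val_continuous].
  - by rewrite psi_hom.
have -> : a = set_val (psi a) by rewrite -[LHS]/(id a) -phi_id phi_psi.
exact: set_valP (psi a).
Qed.

End FreePrecompactNonArchimedean.

Theorem lemma3p11 (X : finType) (G : topologicalType) (gG : topgrp G)
  (i : X -> G) :
  is_free_prec_NA gG i -> algebraically_free gG i.
Proof.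
move=> i_free.
exact: algebraically_free_of_words (free_prec_NA_generated i_free)
  (free_prec_NA_reduced_neq1 i_free).
Qed.
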